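(* Let $n$ be a positive integer and let $\lambda=(\lambda_1\ge\lambda_2\ge\cdots)$ be an integer partition. Then $c_n(c_n(\lambda))=\lambda$ if and only if for every integer $k\ge 0$ there is at most one index $i$ with $kn<\lambda_i<(k+1)n$.
   Context: For a partition $\lambda$, let $\lambda'_j=\#\{t:\lambda_t\ge j\}$ be the length of the $j$-th column of its Young shape ($j\ge1$). For a positive integer $n$, $c_n(\lambda)$ is the partition $\mu=(\mu_1,\mu_2,\dots,\mu_k)$ (of the same size as $\lambda$, zero parts omitted) with $\mu_i=\sum_{j=(i-1)n+1}^{in}\lambda'_j$, i.e. $\mu_i$ is the total number of cells in columns $(i-1)n+1,\dots,in$ of $\lambda$. For example $c_3((7,6,6,6,4,3,3,1))=(22,13,1)$, and $c_1$ is conjugation. *)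

From mathcomp Require Import all_boot.
Set Implicit Arguments. Unset Strict Implicit. Unset Printing Implicit Defensive.

Definition is_partition (l : seq nat) : bool :=
  sorted geq l && all (fun x => 0 < x) l.

Definition conj_part (l : seq nat) (j : nat) : nat :=
  count (fun t => j <= t) l.

(* c_n(lambda): mu_i = sum_{j=(i-1)n+1}^{in} lambda'_j  (i >= 1), zero parts
   omitted.  Since n >= 1, mu_i = 0 once (i-1)n >= lambda_1, so it suffices
   to compute mu_1, ..., mu_{lambda_1} (lambda_1 = head 0 l) and drop zeros. *)
Definition c (n : nat) (l : seq nat) : seq nat :=
  filter (fun x => 0 < x)
    (mkseq (fun i => \sum_(i * n + 1 <= j < i * n + n + 1) conj_part l j) (head 0 l)).

Example c3_example : c 3 [:: 7; 6; 6; 6; 4; 3; 3; 1] = [:: 22; 13; 1].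
Proof. by rewrite /c /conj_part /mkseq /= !unlock. Qed.
Example c1_conj : c 1 [:: 3; 1] = [:: 2; 1; 1].
Proof. by rewrite /c /conj_part /mkseq /= !unlock. Qed.

From mathcomp Require Import all_boot zify.

(* Write mu = c_n(lambda) and nu = c_n(mu), and index parts from 1.  Counting
   row by row, mu_i = sum_t min((lambda_t - (i-1) n)^+, n); so c_n preserves
   the size, and nu_j is obtained from mu in the same way.  If q n <= lambda_j,
   rows 1..j fill the first q blocks of n columns, so mu_i >= j n for i <= q and
   nu_j >= q n + min(mu_{q+1} - (j-1) n, n).
   If no two parts lie strictly inside a common interval (k n, (k+1) n), write
   lambda_j = q n + r; when r > 0 the rows above j end beyond block q+1, so
   mu_{q+1} >= (j-1) n + r and nu_j >= lambda_j.  Thus nu >= lambda pointwise,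
   and equal sizes force nu = lambda.  Conversely, if lambda_a and lambda_j with
   a < j, a minimal, both lie strictly inside (k n, (k+1) n), row j adds a cell
   to mu_{k+1} beyond those of rows 1..a, which pushes nu_a above lambda_a. *)

Set Implicit Arguments.
Unset Strict Implicit.
Unset Printing Implicit Defensive.

Definition block_cells (n : nat) (l : seq nat) (i : nat) : nat :=
  \sum_(t <- l) minn (t - i * n) n.

Definition strictly_in_block (n k x : nat) : bool := (k * n < x) && (x < k.+1 * n).

Lemma sum_indicator_leq (a m t : nat) :
  \sum_(a <= j < a + m) (j <= t : nat) = minn (t.+1 - a) m.
Proof.
elim: m => [|m IH]; first by rewrite addn0 big_geq //; lia.
by rewrite addnS big_nat_recr ?leq_addr //= IH; case: leqP => /=; lia.
Qed.

Lemma sum_conj_part_block (n : nat) (l : seq nat) (i : nat) :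
  \sum_(i * n + 1 <= j < i * n + n + 1) conj_part l j = block_cells n l i.
Proof.
rewrite /conj_part /block_cells.
under eq_bigr => j _ do rewrite -sum1_count big_mkcond.
rewrite exchange_big /=; apply: eq_bigr => t _.
have -> : i * n + n + 1 = i * n + 1 + n by lia.
rewrite (_ : t - i * n = t.+1 - (i * n + 1)); last by lia.
rewrite -sum_indicator_leq; apply: eq_bigr => j _; by case: leqP.
Qed.

Lemma geq_trans : transitive geq.
Proof. exact: rev_trans leq_trans. Qed.

Lemma sorted_geq_le_head (s : seq nat) x : sorted geq s -> x \in s -> x <= head 0 s.
Proof.
case: s => [|h s] //= /(order_path_min geq_trans) /allP le_h.
by rewrite inE => /predU1P [-> | /le_h].
Qed.

Lemma sorted_geq_nth (s : seq nat) i j :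
  sorted geq s -> i <= j -> nth 0 s j <= nth 0 s i.
Proof.
move=> s_sorted le_ij.
have [lt_js | ge_js] := ltnP j (size s); last by rewrite nth_default.
apply: (sorted_leq_nth geq_trans leqnn) => //; rewrite inE //.
exact: leq_ltn_trans le_ij lt_js.
Qed.

Lemma nth_filter_pos (s : seq nat) i :
  sorted geq s -> nth 0 [seq x <- s | 0 < x] i = nth 0 s i.
Proof.
elim: s i => [|x s IH] i s_sorted //=.
have tail_sorted : sorted geq s := path_sorted s_sorted.
case: (posnP x) => [x_eq0 | x_gt0] /=; last by case: i => //= i; apply: IH.
have s_le0 y : y \in x :: s -> y <= 0 by rewrite -x_eq0; apply: sorted_geq_le_head.
rewrite (@eq_in_filter _ _ pred0) ?filter_pred0 ?nth_nil => [|y ys].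
  have [lt_is | ge_is] := ltnP i (size (x :: s)); last by rewrite nth_default.
  by apply/esym/eqP; rewrite -leqn0 s_le0 // mem_nth.
by have := s_le0 y; rewrite inE ys orbT /=; lia.
Qed.

Lemma sorted_geq_mkseq (f : nat -> nat) N :
  {homo f : i j /~ i <= j} -> sorted geq (mkseq f N).
Proof. by move=> f_mono; apply: homo_sorted (iota_sorted 0 N) => i j /f_mono. Qed.

Lemma block_cells_mono (n : nat) (l : seq nat) :
  {homo block_cells n l : i j /~ i <= j}.
Proof.
move=> i j le_ji; apply: leq_sum => t _.
have : j * n <= i * n by rewrite leq_mul2r le_ji orbT.
lia.
Qed.

Lemma block_cells_eq0 (n : nat) (l : seq nat) i :
  0 < n -> sorted geq l -> head 0 l <= i -> block_cells n l i = 0.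
Proof.
move=> n_gt0 l_sorted le_hi; apply: big1_seq => t /andP [_ tl].
have := sorted_geq_le_head l_sorted tl; have : i <= i * n by rewrite leq_pmulr.
lia.
Qed.

Lemma nth_c (n : nat) (l : seq nat) i :
  0 < n -> sorted geq l -> nth 0 (c n l) i = block_cells n l i.
Proof.
move=> n_gt0 l_sorted; rewrite /c; under eq_mkseq do rewrite sum_conj_part_block.
rewrite nth_filter_pos; last exact/sorted_geq_mkseq/block_cells_mono.
have [lt_ih | ge_ih] := ltnP i (head 0 l); first by rewrite nth_mkseq.
by rewrite nth_default ?size_mkseq // block_cells_eq0.
Qed.

Lemma c_partition (n : nat) (l : seq nat) : is_partition (c n l).
Proof.
rewrite /is_partition /c; under eq_mkseq do rewrite sum_conj_part_block.
apply/andP; split; last by rewrite all_filter; apply/allP => x _; apply/implyP.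
exact/(sorted_filter geq_trans)/sorted_geq_mkseq/block_cells_mono.
Qed.

Lemma sum_minn_blocks (n t h : nat) :
  \sum_(0 <= k < h) minn (t - k * n) n = minn t (h * n).
Proof.
elim: h => [|h IH]; first by rewrite big_geq // mul0n minn0.
by rewrite big_nat_recr //= IH mulSnr; lia.
Qed.

Lemma sumn_c (n : nat) (l : seq nat) : 0 < n -> sorted geq l -> sumn (c n l) = sumn l.
Proof.
move=> n_gt0 l_sorted; rewrite /c !sumnE big_filter big_rmcond => [|x]; last by case: x.
rewrite big_map; under eq_bigr do rewrite sum_conj_part_block.
rewrite exchange_big /=; apply: eq_big_seq => t tl.
have := sum_minn_blocks n t (head 0 l); rewrite /index_iota subn0 => ->.
have := sorted_geq_le_head l_sorted tl.
have : head 0 l <= head 0 l * n by rewrite leq_pmulr.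
lia.
Qed.

Lemma block_cells_nth (n : nat) (l : seq nat) k B : size l <= B ->
  block_cells n l k = \sum_(0 <= s < B) minn (nth 0 l s - k * n) n.
Proof.
move=> le_lB; rewrite /block_cells (big_nth 0) [RHS](big_cat_nat (leq0n _) le_lB) /=.
rewrite [X in _ + X]big1_seq ?addn0 // => s /andP [_].
rewrite mem_index_iota => /andP [ge_sl _].
by rewrite nth_default // sub0n min0n.
Qed.

Lemma leq_block_cells2 (n : nat) (l : seq nat) k j t : j < t ->
  (forall s, s < j -> k.+1 * n <= nth 0 l s) ->
  j * n + minn (nth 0 l j - k * n) n + minn (nth 0 l t - k * n) n <= block_cells n l k.
Proof.
move=> lt_jt full_above; set F := fun s => minn (nth 0 l s - k * n) n.
rewrite (@block_cells_nth _ _ _ (t.+1 + size l)) ?leq_addl // -/(F _).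
rewrite (@big_cat_nat _ _ _ j.+1) //; last by lia.
apply: leq_add.
  rewrite big_nat_recr // leq_add2r (eq_big_nat _ _ (F2 := fun=> n)).
    by rewrite sum_nat_const_nat subn0 mulnC.
  by move=> s /andP [_ lt_sj]; have := full_above s lt_sj; rewrite mulSn /F; lia.
rewrite (bigD1_seq t) ?iota_uniq ?leq_addr // mem_index_iota; lia.
Qed.

Lemma leq_block_cells (n : nat) (l : seq nat) k j :
  (forall s, s < j -> k.+1 * n <= nth 0 l s) ->
  j * n + minn (nth 0 l j - k * n) n <= block_cells n l k.
Proof.
move=> full_above.
by rewrite (leq_trans _ (leq_block_cells2 (ltnSn j) full_above)) ?leq_addr.
Qed.

Lemma full_rows_block_cells (n : nat) (l : seq nat) k j :
  sorted geq l -> k.+1 * n <= nth 0 l j -> j.+1 * n <= block_cells n l k.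
Proof.
move=> l_sorted full_j; apply: leq_trans (leq_block_cells (j := j) _) => [|s lt_sj].
  by move: full_j; rewrite !mulSn; lia.
exact: leq_trans full_j (sorted_geq_nth l_sorted (ltnW lt_sj)).
Qed.

Lemma leq_nth_cc (n : nat) (l : seq nat) j q :
  0 < n -> sorted geq l -> q * n <= nth 0 l j ->
  q * n + minn (block_cells n l q - j * n) n <= nth 0 (c n (c n l)) j.
Proof.
move=> n_gt0 l_sorted le_qn_lj; have /andP [cl_sorted _] := c_partition n l.
rewrite nth_c // -[block_cells n l q]nth_c //; apply: leq_block_cells => s lt_sq.
rewrite nth_c //; apply: full_rows_block_cells => //.
by apply: leq_trans le_qn_lj; rewrite leq_mul2r lt_sq orbT.
Qed.

Lemma leq_sumn_nth (s1 s2 : seq nat) :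
  (forall i, nth 0 s1 i <= nth 0 s2 i) -> sumn s1 <= sumn s2.
Proof.
elim: s1 s2 => [|x s1 IH] [|y s2] le_s12 //=.
  have tail_le0 i : nth 0 s1 i <= nth 0 [::] i by move: (le_s12 i.+1); rewrite !nth_nil.
  by have := le_s12 0; have := IH [::] tail_le0; rewrite /=; lia.
exact: leq_add (le_s12 0) (IH s2 (fun i => le_s12 i.+1)).
Qed.

Lemma leq_nth_sumn_eq (s1 s2 : seq nat) :
  all (fun x => 0 < x) s1 -> all (fun x => 0 < x) s2 ->
  (forall i, nth 0 s1 i <= nth 0 s2 i) -> sumn s2 <= sumn s1 -> s1 = s2.
Proof.
elim: s1 s2 => [|x s1 IH] [|y s2] //=.
- by move=> _ /andP [y_gt0 _] _; lia.
- by move=> /andP [x_gt0 _] _ /(_ 0) /=; lia.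
move=> /andP [_ pos1] /andP [_ pos2] le_s12 le_sum.
have le_xy : x <= y := le_s12 0; have le_tail := leq_sumn_nth (fun i => le_s12 i.+1).
have eq_xy : x = y by lia.
rewrite eq_xy (IH s2) // => [i|]; [exact: le_s12 i.+1 | lia].
Qed.

Lemma count_gt1_after_find (T : Type) (x0 : T) (p : pred T) (s : seq T) :
  1 < count p s -> exists2 j, find p s < j < size s & p (nth x0 s j).
Proof.
elim: s => [|x s IH] //=; case: (p x) => /= [count_gt1 | /IH [j lt_fjs pj]].
  have has_ps : has p s by rewrite has_count; lia.
  by exists (find p s).+1; rewrite ?nth_find //= ltnS -has_find.
by exists j.+1.
Qed.

Lemma count_gt1_nth (T : Type) (x0 : T) (p : pred T) (s : seq T) i j :
  i < j < size s -> p (nth x0 s i) -> p (nth x0 s j) -> 1 < count p s.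
Proof.
elim: s i j => [|x s IH] [|i] [|j] //=; rewrite ?andbF // !ltnS.
  by move=> lt_js -> pj; rewrite add1n ltnS -has_count; apply/(has_nthP x0); exists j.
move=> lt_ijs pi pj; have := IH i j lt_ijs pi pj; lia.
Qed.

Lemma cc_fixed_count_block (n : nat) (l : seq nat) k :
  0 < n -> sorted geq l -> c n (c n l) = l -> count (strictly_in_block n k) l <= 1.
Proof.
move=> n_gt0 l_sorted cc_l; rewrite leqNgt; apply/negP => count_gt1.
have [j /andP [lt_aj lt_jl] in_j] := count_gt1_after_find 0 count_gt1.
set a := find _ l in lt_aj.
have in_a : strictly_in_block n k (nth 0 l a) by apply/nth_find; rewrite has_count; lia.
have full_above s : s < a -> k.+1 * n <= nth 0 l s.
  move=> lt_sa; have := before_find 0 lt_sa.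
  have := sorted_geq_nth l_sorted (ltnW lt_sa).
  by move: in_a; rewrite /strictly_in_block; lia.
have le_block := leq_block_cells2 lt_aj full_above.
have := @leq_nth_cc n l a k n_gt0 l_sorted; rewrite cc_l.
by move: in_a in_j le_block; rewrite /strictly_in_block !mulSn; lia.
Qed.

Lemma leq_nth_cc_of_count (n : nat) (l : seq nat) j :
  0 < n -> sorted geq l -> (forall k, count (strictly_in_block n k) l <= 1) ->
  nth 0 l j <= nth 0 (c n (c n l)) j.
Proof.
move=> n_gt0 l_sorted count_le1.
have [ge_jl | lt_jl] := leqP (size l) j; first by rewrite nth_default.
set x := nth 0 l j.
have x_eq := divn_eq x n; have lt_rn := ltn_pmod x n_gt0.
set q := x %/ n in x_eq; set r := x %% n in x_eq lt_rn.
have le_qn_x : q * n <= x by rewrite x_eq leq_addr.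
have := leq_nth_cc n_gt0 l_sorted le_qn_x; have [r0 | r_gt0] := posnP r; first lia.
have full_above s : s < j -> q.+1 * n <= nth 0 l s.
  move=> lt_sj; rewrite leqNgt; apply/negP => lt_s.
  have := count_le1 q; rewrite leqNgt => /negP; apply.
  have := sorted_geq_nth l_sorted (ltnW lt_sj); rewrite -/x => le_xs.
  apply: (count_gt1_nth (x0 := 0) (i := s) (j := j));
    by rewrite /strictly_in_block ?lt_sj // -/x; lia.
have := leq_block_cells full_above; rewrite -/x; lia.
Qed.

Theorem mainTheorem2 (n : nat) (l : seq nat) :
  0 < n -> is_partition l ->
  (c n (c n l) = l <->
   forall k : nat, count (fun x => (k * n < x) && (x < k.+1 * n)) l <= 1).
Proof.
move=> n_gt0 /andP [l_sorted l_pos]; split => [cc_l k | count_le1].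
  exact: cc_fixed_count_block.
have /andP [_ cc_pos] := c_partition n (c n l).
apply/esym/leq_nth_sumn_eq => // [j|]; first exact: leq_nth_cc_of_count.
have /andP [cl_sorted _] := c_partition n l.
by rewrite !sumn_c.
Qed.
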